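(* Let $\beta>0$, $\gamma\ge0$, $0\le q<s<\infty$, and let $\mu$ be a finite positive Borel measure on $[0,1)$. The following are equivalent: (1) $\mu$ is a $\gamma$-logarithmic $s$-Carleson measure; (2) $\displaystyle\sup_{w\in\mathbb{D}}\int_{[0,1)}\frac{(1-|w|)^\beta\log^\gamma\frac{e}{1-|w|}}{(1-t)^q(1-|w|t)^{s+\beta-q}}\,d\mu(t)<\infty$; (3) $\displaystyle\sup_{w\in\mathbb{D}}\int_{[0,1)}\frac{(1-|w|)^\beta\log^\gamma\frac{e}{1-|w|}}{(1-t)^q|1-wt|^{s+\beta-q}}\,d\mu(t)<\infty$; (4) $\displaystyle\sup_{w\in\mathbb{D}}\int_{[0,1)}\frac{(1-|w|)^\beta\log^\gamma\frac{e}{1-t}}{(1-t)^q(1-|w|t)^{s+\beta-q}}\,d\mu(t)<\infty$.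
   Context: $\mathbb{D}$ is the open unit disc. For $\gamma\ge0$ and $s>0$, a finite positive Borel measure $\mu$ on $[0,1)$ is a $\gamma$-logarithmic $s$-Carleson measure if there is $C>0$ with $\log^\gamma\!\big(\frac{e}{1-t}\big)\mu([t,1))\le C(1-t)^s$ for all $t\in[0,1)$. *)

From mathcomp Require Import all_boot all_algebra all_classical all_reals all_analysis.
From mathcomp Require Import complex.
Import GRing.Theory Num.Theory.
Local Open Scope ring_scope.
Local Open Scope classical_set_scope.

Definition cmod {R : realType} (w : R[i]) : R := complex.Re `|w|.

Definition loge {R : realType} (g x : R) : R := powR (ln (expR 1 / x)) g.

Definition log_carleson {R : realType} (mu : {measure set R -> \bar R})
  (g s : R) : Prop :=
  exists C : R, 0 < C /\ forall t : R, 0 <= t < 1 ->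
    ((loge g (1 - t))%:E * mu `[t, 1%R[%classic <= (C * powR (1 - t) s)%:E)%E.

From mathcomp Require Import all_boot all_algebra all_classical all_reals all_analysis.
From mathcomp Require Import complex measurable_realfun.
From mathcomp Require Import ring lra.
Import GRing.Theory Num.Theory.
Import order.Order.TTheory.
Local Open Scope ring_scope.
Local Open Scope classical_set_scope.

(* Integrals (2) and (4) depend on w only through r = |w|, and
   |1 - w t| >= 1 - r t with equality for w = r, so (3) is squeezed between
   (2) on the disc and (2) on [0, 1).

   Bounded integrals give the Carleson condition: for w = r and t in [r, 1)
   one has 1 - t <= 1 - r and 1 - r t <= 2 (1 - r), so the kernel is at least
   2^-(s+beta-q) (1 - r)^-s there, and the weight is at least log^g(e/(1-r)).

   Conversely, cut [0, 1) into the dyadic annuli 2^-(n+1) < 1 - t <= 2^-n.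
   On the n-th annulus the integrand is at most a_n, and the Carleson
   condition bounds the mass of [1 - 2^-n, 1) by 2^-ns / log^g(e 2^n).  Since
   logarithms grow slower than any power, a_n times that mass is at most a
   constant times min(v_n, 1/v_n), with v_n = (2^(n+1) (1 - r))^c and
   c = min(beta/2, s-q): a two-sided geometric series, bounded independently
   of r. *)

Lemma ge0_le_integral_nonmeas {d} {T : measurableType d} {R : realType}
    (mu : {measure set T -> \bar R}) (D : set T) (f1 f2 : T -> \bar R) :
  (forall x, D x -> (0 <= f1 x)%E) -> (forall x, D x -> (f1 x <= f2 x)%E) ->
  (\int[mu]_(x in D) f1 x <= \int[mu]_(x in D) f2 x)%E.
Proof.
move=> f10 f12.
have f20 x : D x -> (0 <= f2 x)%E by move=> Dx; exact: le_trans (f10 _ Dx) (f12 _ Dx).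
rewrite !ge0_integralE//; apply: ereal_sup_le => _ /= [h hf1 <-].
by exists h => //= x; apply: le_trans (hf1 x) _; exact: lee_restrict.
Qed.

Lemma ler_frac (R : numFieldType) (a b c d : R) :
  0 <= a -> a <= b -> 0 < d -> d <= c -> a / c <= b / d.
Proof.
move=> a0 ab d0 dc; apply: le_trans (ler_wpM2r _ ab); last by rewrite invr_ge0 ltW.
by rewrite ler_wpM2l // lef_pV2 ?posrE // (lt_le_trans d0).
Qed.

Lemma expRN_norm (R : realType) (y : R) :
  expR (- `|y|) = Num.min (expR y) (expR y)^-1.
Proof.
rewrite -expRN; have [y0|y0] := leP 0 y.
- by rewrite ger0_norm //; apply/esym/min_r; rewrite ler_expR; lra.
- by rewrite ltr0_norm // opprK; apply/esym/min_l; rewrite ler_expR; lra.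
Qed.

Lemma sum_min_geometric (R : realType) (rho : R) (v : nat -> R) M :
  0 < rho < 1 -> (forall n, 0 < v n) -> (forall n, v n = rho * v n.+1) ->
  \sum_(0 <= n < M) Num.min (v n) (v n)^-1 <= 2 / (1 - rho).
Proof.
move=> /andP[rho0 rho1] v0 vS.
have inv m : (1 - rho) * \sum_(0 <= n < m) Num.min (v n) (v n)^-1 + Num.min 1 (v m)^-1
    <= Num.min (rho * v m) 1 + 1.
  elim: m => [|m IH].
    rewrite big_geq // mulr0 add0r.
    have : 0 <= Num.min (rho * v 0%N) 1 by rewrite le_min ler01 mulr_ge0 ?ltW.
    have : Num.min 1 (v 0%N)^-1 <= 1 by rewrite ge_min lexx.
    lra.
  rewrite big_nat_recr //= mulrDr -vS.
  have vinv : (v m.+1)^-1 = rho * (v m)^-1.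
    by rewrite (vS m) invfM mulrA mulfV ?mul1r ?gt_eqF.
  have vm0 := v0 m; have min1 : Num.min 1 (v m.+1)^-1 <= 1 by rewrite ge_min lexx.
  have [vm1|vm1] := leP (v m) 1.
  - have e1 : Num.min (v m) (v m)^-1 = v m.
      by apply/min_l; rewrite (le_trans vm1) // invf_ge1.
    have e2 : Num.min 1 (v m)^-1 = 1 by apply/min_l; rewrite invf_ge1.
    have e3 : Num.min (rho * v m) 1 = rho * v m.
      by apply/min_l; rewrite (le_trans _ vm1) // ger_pMl // ltW.
    rewrite e1; rewrite e2 e3 in IH; lra.
  - have e1 : Num.min (v m) (v m)^-1 = (v m)^-1.
      by apply/min_r; apply: le_trans (ltW vm1); rewrite invf_le1 // ltW.
    have e2 : Num.min 1 (v m)^-1 = (v m)^-1 by apply/min_r; rewrite invf_le1 // ltW.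
    have e3 : Num.min 1 (v m.+1)^-1 = rho * (v m)^-1.
      rewrite vinv; apply/min_r; have vi0 : 0 <= (v m)^-1 by rewrite invr_ge0 ltW.
      by move: e2 => /min_idPr; nra.
    have : Num.min (rho * v m) 1 <= 1 by rewrite ge_min lexx orbT.
    rewrite e1 e3; rewrite e2 in IH; lra.
have := inv M; rewrite ler_pdivlMr ?subr_gt0 // mulrC.
have : Num.min (rho * v M) 1 <= 1 by rewrite ge_min lexx orbT.
have : 0 <= Num.min 1 (v M)^-1 by rewrite le_min ler01 invr_ge0 ltW.
lra.
Qed.

Definition dyad {R : realType} (n : nat) : R := (2 ^+ n)^-1.

Section dyadic.
Context {R : realType}.

Lemma dyad_gt0 n : 0 < dyad n :> R.
Proof. by rewrite /dyad invr_gt0 exprn_gt0. Qed.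

Lemma dyad_le1 n : dyad n <= 1 :> R.
Proof. by rewrite /dyad invf_le1 ?exprn_gt0// exprn_ege1// ler1n. Qed.

Lemma dyad_double n : 2 * dyad n.+1 = dyad n :> R.
Proof. by rewrite /dyad exprS invfM mulrA mulfV ?mul1r. Qed.

Lemma ln_dyad n : ln (dyad n) = - (n%:R * ln 2) :> R.
Proof. by rewrite /dyad lnV ?posrE ?exprn_gt0// lnXn// mulr_natl. Qed.

Lemma dyadic_annulus (y : R) : 0 < y <= 1 -> exists n, dyad n.+1 < y <= dyad n.
Proof.
move=> /andP[y0 y1].
have ex : exists m, dyad m < y.
  have y'0 : 0 <= y^-1 by rewrite invr_ge0 ltW.
  exists (Num.Def.archi_bound y^-1); set N := Num.Def.archi_bound _.
  rewrite /dyad -(invrK y) ltf_pV2 ?posrE ?exprn_gt0 ?invr_gt0//.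
  apply: lt_trans (archi_boundP y'0) _; rewrite -/N -natrX ltr_nat.
  exact: ltn_expl.
case: (ex_minnP ex) => n yn nmin.
case: n yn nmin => [|n] yn nmin; first by move: yn; rewrite /dyad expr0 invr1 ltNge y1.
by exists n; rewrite yn leNgt; apply/negP => /nmin; rewrite ltnn.
Qed.

Lemma integral_le_dyadic_series (mu : {measure set R -> \bar R}) (f : R -> R) (a : nat -> R) :
  (forall n, 0 <= a n) -> (forall t, 0 <= t < 1 -> 0 <= f t) ->
  (forall n t, 0 <= t < 1 -> dyad n.+1 < 1 - t <= dyad n -> f t <= a n) ->
  (\int[mu]_(t in `[0%R, 1%R[) (f t)%:E <=
     \sum_(0 <= n <oo) ((a n)%:E * mu `[(1 - dyad n)%R, 1%R[))%E.
Proof.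
move=> a0 f0 fa.
set D := `[0%R, 1%R[%classic; pose E n := `[(1 - @dyad R n)%R, 1%R[%classic.
have mD : measurable D by exact: measurable_itv.
have mE n : measurable (E n) by exact: measurable_itv.
have ED n : E n `<=` D.
  move=> t; rewrite /E /D /= !in_itv /= => /andP[+ ->]; rewrite andbT.
  by apply: le_trans; rewrite subr_ge0 dyad_le1.
have f_ge0 t : D t -> (0 <= (f t)%:E)%E.
  by rewrite /D /= in_itv /= => /f0; rewrite lee_fin.
have f_le t : D t -> ((f t)%:E <= \sum_(0 <= n <oo) (a n * \1_(E n) t)%:E)%E.
  rewrite /D /= in_itv /= => /andP[t0 t1].
  have [|n /andP[lt_n le_n]] := dyadic_annulus (1 - t).
    by rewrite subr_gt0 t1 lerBlDr lerDl.
  rewrite (@nneseriesD1 _ _ n) //; last by move=> k _; rewrite lee_fin mulr_ge0.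
  apply: le_trans (leeDl _ _); last first.
    by apply: nneseries_ge0 => k _ _; rewrite lee_fin mulr_ge0.
  have Ent : E n t by rewrite /E /= in_itv /= t1 andbT; lra.
  by rewrite indicE mem_set // mulr1 lee_fin; apply: fa; rewrite ?t0 ?t1 ?lt_n.
apply: le_trans (ge0_le_integral_nonmeas mu _ _ _ f_ge0 f_le) _.
rewrite integral_nneseries //; last 2 first.
- by move=> n; apply/measurable_EFinP; exact: measurable_funM.
- by move=> n t _; rewrite lee_fin mulr_ge0.
apply: lee_nneseries => [n _ _|n _].
  by apply: integral_ge0 => t _; rewrite lee_fin mulr_ge0.
rewrite (integralZl_indic mD (fun=> E n) (a n)) //; last first.
  by move=> /lt_le_trans /(_ (a0 n)); rewrite ltxx.
by rewrite integral_indic // setIidl.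
Qed.

End dyadic.

Section log_weight.
Context {R : realType}.
Implicit Types g x y z : R.

Lemma ln2_ge0 : 0 <= ln 2 :> R.
Proof. by rewrite ln_ge0 // ler1n. Qed.

Lemma ln2_le1 : ln 2 <= 1 :> R.
Proof. by have := @le_ln1Dx R 1 (lt_trans (ltrN10 _) ltr01). Qed.

Lemma logeE g y : 0 < y -> loge g y = powR (1 - ln y) g.
Proof. by move=> y0; rewrite /loge ln_div ?posrE ?expR_gt0 // expRK. Qed.

Lemma loge_ge0 g y : 0 <= loge g y.
Proof. exact: powR_ge0. Qed.

Lemma loge_gt0 g y : 0 < y <= 1 -> 0 < loge g y.
Proof.
move=> /andP[y0 y1]; rewrite logeE // powR_gt0 //.
by rewrite (lt_le_trans ltr01) // lerDl oppr_ge0 ln_le0.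
Qed.

Lemma le_loge {g y z} : 0 <= g -> 0 < y -> y <= z -> z <= 1 -> loge g z <= loge g y.
Proof.
move=> g0 y0 yz z1; have z0 := lt_le_trans y0 yz.
have lnz0 : ln z <= 0 by rewrite ln_le0.
have lny0 : ln y <= 0 by rewrite ln_le0 // (le_trans yz).
rewrite !logeE // ge0_ler_powR // ?nnegrE ?lerD2l ?lerN2 ?ler_ln ?posrE //; lra.
Qed.

Lemma loge_min {g y z} : 0 <= g -> 0 < y <= 1 -> 0 < z <= 1 ->
  loge g (Num.min y z) = Num.max (loge g y) (loge g z).
Proof.
move=> g0 /andP[y0 y1] /andP[z0 z1].
have [yz|zy] := leP y z; first by rewrite max_l // le_loge.
by rewrite max_r // le_loge // ltW.
Qed.

Lemma loge_double {g y} : 0 <= g -> 0 < y -> 2 * y <= 1 ->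
  loge g y <= powR 2 g * loge g (2 * y).
Proof.
move=> g0 y0 y1; have y20 : 0 < 2 * y by rewrite mulr_gt0.
have ln2y : ln (2 * y) = ln 2 + ln y by rewrite lnM ?posrE.
have := ln_le0 y1; have := @ln2_le1; have := @ln2_ge0.
rewrite ln2y => ln20 ln21 ln2y0.
rewrite !logeE // -powRM ?ln2y //; last lra.
by rewrite ge0_ler_powR // ?nnegrE; lra.
Qed.

Lemma powR_2Dln_le {g b} : 0 <= g -> 0 < b ->
  exists2 K, 0 < K & forall u, 1 <= u -> powR (2 + ln u) g <= K * powR u b.
Proof.
move=> g0 b0; have g10 : 0 < g + 1 by lra.
pose a := b / (g + 1); have a0 : 0 < a by rewrite divr_gt0.
exists (expR (g * (2 * a - 1 - ln a))) => [|u u1]; first exact: expR_gt0.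
have u0 := lt_le_trans ltr01 u1; have z0 := ln_ge0 u1; set z := ln u in z0 *.
have z2 : 0 < 2 + z by lra.
rewrite /powR !gt_eqF // -expRD ler_expR -/z.
have lnv : ln a + ln (2 + z) <= a * (2 + z) - 1.
  rewrite -lnM ?posrE //; have := @le_ln1Dx R (a * (2 + z) - 1).
  by rewrite [1 + _]addrC subrK; apply; have := mulr_gt0 a0 z2; lra.
have := ler_wpM2l g0 lnv.
have ga : g * a <= b by rewrite /a mulrCA ger_pMr // ler_pdivrMr // mul1r; lra.
have : 0 <= (b - g * a) * z by rewrite mulr_ge0 // subr_ge0.
lra.
Qed.

Lemma loge_le_powR_ratio {g b K x y} : 0 <= g ->
    (forall u, 1 <= u -> powR (2 + ln u) g <= K * powR u b) ->
  0 < x -> x <= y -> 2 * y <= 1 ->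
  loge g x <= K * powR (y / x) b * loge g (2 * y).
Proof.
move=> g0 hK x0 xy y1; have y0 := lt_le_trans x0 xy; have y20 : 0 < 2 * y by lra.
have yx1 : 1 <= y / x by rewrite ler_pdivlMr // mul1r.
apply: le_trans (ler_wpM2r (loge_ge0 _ _) (hK _ yx1)).
have := ln_ge0 yx1; have := ln_le0 y1; have := @ln2_le1; have := @ln2_ge0.
rewrite (logeE _ _ x0) (logeE _ _ y20) ln_div ?lnM ?posrE // => ln20 ln21 ln2y lnyx.
have : 0 <= (- ln 2 - ln y) * (ln y - ln x) by rewrite mulr_ge0 //; lra.
by move=> ?; rewrite -powRM ?ge0_ler_powR ?nnegrE //; lra.
Qed.

End log_weight.

(* The integrals (2) and (4) are [weighted_integral mu beta q s |w| N] with
   [N t = loge g (1 - |w|)] and [N t = loge g (1 - t)] respectively. *)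
Definition weighted_integral {R : realType} (mu : {measure set R -> \bar R})
    (beta q s r : R) (N : R -> R) : \bar R :=
  (\int[mu]_(t in `[0%R, 1%R[)
     (powR (1 - r) beta * N t / (powR (1 - t) q * powR (1 - r * t) (s + beta - q)))%:E)%E.

Lemma carleson_tail_le {R : realType} {mu : {measure set R -> \bar R}} {g s C y : R} :
  (forall t, 0 <= t < 1 ->
    ((loge g (1 - t))%:E * mu `[t, 1%R[ <= (C * powR (1 - t) s)%:E)%E) ->
  0 < y <= 1 -> (mu `[(1 - y)%R, 1%R[ <= (C * powR y s / loge g y)%:E)%E.
Proof.
move=> hC y01; have /hC : 0 <= 1 - y < 1.
  by case/andP: y01 => y0 y1; rewrite subr_ge0 y1 ltrBlDr ltrDl.
by rewrite opprB addrC subrK -lee_pdivlMl ?loge_gt0 // -EFinM mulrC.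
Qed.

Section carleson_upper_bound.
Context {R : realType} {beta g q s : R}.
Hypotheses (beta0 : 0 < beta) (g0 : 0 <= g) (q0 : 0 <= q) (qs : q < s).
Let p := s + beta - q.
Let c := Num.min (beta / 2) (s - q).

Let p_gt0 : 0 < p. Proof. by rewrite /p addrAC addr_gt0 // subr_gt0. Qed.

Lemma dyadic_term_le (C K x e : R) : 0 < C ->
    (forall u, 1 <= u -> powR (2 + ln u) g <= K * powR u (beta / 2)) ->
  0 < x -> 0 < e -> 2 * e <= 1 ->
  powR x beta * loge g (Num.min x e) / (powR e q * powR (Num.max x e) p)
    * (C * powR (2 * e) s / loge g (2 * e))
  <= C * powR 2 s * K * expR (- c * `|ln x - ln e|).
Proof.
move=> C0 hK x0 e0 e1.
have K2 : powR 2 g <= K by have := hK 1 (lexx _); rewrite ln1 addr0 powR1 mulr1.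
have K0 : 0 < K by apply: lt_le_trans K2; rewrite powR_gt0.
have L20 : 0 < loge g (2 * e) by rewrite loge_gt0 // mulr_gt0.
have reduce y z M : 0 < z -> loge g y <= M * loge g (2 * e) ->
    powR x beta * loge g y / (powR e q * powR z p) * (C * powR (2 * e) s / loge g (2 * e))
    <= C * M * (powR x beta * powR (2 * e) s / (powR e q * powR z p)).
  move=> z0 hM; have D0 : 0 < powR e q * powR z p by rewrite mulr_gt0 ?powR_gt0.
  apply: le_trans (ler_wpM2r _ (ler_wpM2r _ (ler_wpM2l (powR_ge0 _ _) hM))) _.
  - by rewrite divr_ge0 ?mulr_ge0 ?powR_ge0 ?ltW.
  - by rewrite invr_ge0 ltW.
  - by rewrite le_eqVlt; apply/orP; left; apply/eqP; field;
      rewrite (gt_eqF L20) !gt_eqF ?powR_gt0.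
have cb : c <= beta / 2 by rewrite ge_min lexx.
have cs : c <= s - q by rewrite ge_min lexx orbT.
have ln2e : ln (2 * e) = ln 2 + ln e by rewrite lnM ?posrE.
have [xe|ex] := leP x e.
- apply: le_trans (reduce _ _ _ e0 (loge_le_powR_ratio g0 hK x0 xe e1)) _.
  rewrite /powR !gt_eqF ?mulr_gt0 ?divr_gt0 ?invr_gt0 // ln2e ln_div ?posrE //.
  rewrite -ler_ln ?posrE ?(mulr_gt0, invr_gt0, expR_gt0) //.
  rewrite !(lnM, lnV) ?posrE ?(mulr_gt0, invr_gt0, expR_gt0) // !expRK.
  rewrite ler0_norm ?subr_le0 ?ler_ln ?posrE //.
  have : 0 <= (beta / 2 - c) * (ln e - ln x) by rewrite mulr_ge0 ?subr_ge0 ?ler_ln ?posrE.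
  rewrite /p; lra.
- have hM : loge g e <= K * loge g (2 * e).
    by apply: le_trans (loge_double g0 e0 e1) _; rewrite ler_wpM2r ?loge_ge0.
  apply: le_trans (reduce _ _ _ x0 hM) _.
  rewrite /powR !gt_eqF ?mulr_gt0 // ln2e.
  rewrite -ler_ln ?posrE ?(mulr_gt0, invr_gt0, expR_gt0) //.
  rewrite !(lnM, lnV) ?posrE ?(mulr_gt0, invr_gt0, expR_gt0) // !expRK.
  have ex' := ltW ex; rewrite ger0_norm ?subr_ge0 ?ler_ln ?posrE //.
  have : 0 <= (s - q - c) * (ln x - ln e) by rewrite mulr_ge0 ?subr_ge0 ?ler_ln ?posrE.
  rewrite /p; lra.
Qed.

Lemma weighted_integrand_le_annulus (r t e Nt : R) :
  0 <= r < 1 -> 0 <= t < 1 -> 0 < e < 1 - t ->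
  0 <= Nt <= loge g (Num.min (1 - r) (1 - t)) ->
  powR (1 - r) beta * Nt / (powR (1 - t) q * powR (1 - r * t) p)
  <= powR (1 - r) beta * loge g (Num.min (1 - r) e) /
       (powR e q * powR (Num.max (1 - r) e) p).
Proof.
move=> /andP[r0 r1] /andP[t0 t1] /andP[e0 et] /andP[Nt0 Nt_le].
have x0 : 0 < 1 - r by rewrite subr_gt0.
apply: ler_frac; rewrite ?mulr_ge0 ?powR_ge0 ?mulr_gt0 ?powR_gt0 ?lt_max ?x0 //.
- apply: ler_wpM2l; rewrite ?powR_ge0 //; apply: le_trans Nt_le (le_loge g0 _ _ _).
  + by rewrite lt_min x0 e0.
  + by rewrite le_min !ge_min lexx /= (ltW et) orbT.
  + by rewrite ge_min lerBlDr lerDl r0.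
- have rt1 : 0 <= r * (1 - t) by rewrite mulr_ge0 // subr_ge0 ltW.
  have rt2 : 0 <= (1 - r) * t by rewrite mulr_ge0 // ltW.
  apply: ler_pM; rewrite ?powR_ge0 //.
  + by apply: ge0_ler_powR; rewrite ?nnegrE //; lra.
  + apply: ge0_ler_powR; rewrite ?nnegrE ?le_max ?(ltW x0) //; first exact: ltW.
      by lra.
    by rewrite ge_max; apply/andP; split; lra.
Qed.

Lemma log_carleson_weighted_bounded (mu : {measure set R -> \bar R}) :
  log_carleson mu g s -> exists M : R, forall (r : R) (N : R -> R), 0 <= r < 1 ->
    (forall t, 0 <= t < 1 -> 0 <= N t <= loge g (Num.min (1 - r) (1 - t))) ->
    (weighted_integral mu beta q s r N <= M%:E)%E.
Proof.
case=> C [C0 hC]; have [K K0 hK] := powR_2Dln_le g0 (divr_gt0 beta0 (ltr0Sn _ 1)).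
have c0 : 0 < c by rewrite lt_min divr_gt0 // subr_gt0.
pose rho := expR (- (c * ln 2)).
have rho01 : 0 < rho < 1 by rewrite expR_gt0 expR_lt1 oppr_lt0 mulr_gt0 // ln_gt0 // ltr1n.
exists (C * powR 2 s * K * (2 / (1 - rho))) => r N r01 hN.
have x0 : 0 < 1 - r by case/andP: r01 => _; rewrite subr_gt0.
pose e n : R := dyad n.+1.
have e0 n : 0 < e n := dyad_gt0 _.
pose a n := powR (1 - r) beta * loge g (Num.min (1 - r) (e n)) /
  (powR (e n) q * powR (Num.max (1 - r) (e n)) p).
have a0 n : 0 <= a n by rewrite divr_ge0 ?mulr_ge0 ?powR_ge0 ?loge_ge0.
apply: le_trans (integral_le_dyadic_series mu _ a a0 _ _) _.
- move=> t /hN /andP[Nt0 _]; rewrite divr_ge0 ?mulr_ge0 ?powR_ge0 //.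
- move=> n t t01 /andP[et _]; have ent : 0 < e n < 1 - t by rewrite e0.
  exact: weighted_integrand_le_annulus r01 t01 ent (hN t t01).
set G := fun n => expR (- c * `|ln (1 - r) - ln (e n)|).
apply: (@le_trans _ _ (\sum_(0 <= n <oo) (C * powR 2 s * K * G n)%:E)%E).
  apply: lee_nneseries => [n _ _|n _]; first by rewrite mule_ge0 ?lee_fin.
  have n01 : 0 < @dyad R n <= 1 by rewrite dyad_gt0 dyad_le1.
  apply: le_trans (lee_wpmul2l _ (carleson_tail_le hC n01)) _; first by rewrite lee_fin.
  rewrite -EFinM lee_fin -(dyad_double n).
  by apply: dyadic_term_le; rewrite ?dyad_double ?dyad_le1 ?e0.
apply: lime_le.
  by apply: is_cvg_nneseries => n _ _; rewrite lee_fin !mulr_ge0 ?powR_ge0 ?expR_ge0 ?ltW.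
apply: nearW => M; rewrite sumEFin lee_fin -mulr_sumr; apply: ler_wpM2l.
  by rewrite !mulr_ge0 ?powR_ge0 ?ltW.
pose v n := expR (c * (ln (1 - r) - ln (e n))).
have -> : \sum_(0 <= n < M) G n = \sum_(0 <= n < M) Num.min (v n) (v n)^-1.
  apply: eq_bigr => n _; rewrite /G /v -expRN_norm normrM gtr0_norm //; congr expR; lra.
apply: sum_min_geometric => // [n|n]; first exact: expR_gt0.
rewrite /v /rho -expRD /e !ln_dyad; congr expR; lra.
Qed.

End carleson_upper_bound.

Lemma kernel_ge (R : realType) (beta q s r t : R) :
  0 <= q -> q < s -> 0 < beta -> 0 <= r -> r <= t -> t < 1 ->
  (powR 2 (s + beta - q) * powR (1 - r) s)^-1
    <= powR (1 - r) beta / (powR (1 - t) q * powR (1 - r * t) (s + beta - q)).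
Proof.
move=> q0 qs beta0 r0 rt t1; set p := s + beta - q.
have r1 : 0 < 1 - r by lra.
have t1' : 0 < 1 - t by lra.
have rt0 : 0 <= r * (t - r) by rewrite mulr_ge0 // subr_ge0.
have rt1 : 0 < 1 - r * t by nra.
have lnt : ln (1 - t) <= ln (1 - r) by rewrite ler_ln ?posrE //; lra.
have lnrt : ln (1 - r * t) <= ln 2 + ln (1 - r).
  by rewrite -lnM ?posrE // ler_ln ?posrE ?mulr_gt0 //; nra.
have hq : 0 <= q * (ln (1 - r) - ln (1 - t)) by rewrite mulr_ge0 // subr_ge0.
have hp : 0 <= p * (ln 2 + ln (1 - r) - ln (1 - r * t)).
  by rewrite mulr_ge0 ?subr_ge0 // /p; lra.
rewrite /powR !gt_eqF // -ler_ln ?posrE ?(mulr_gt0, invr_gt0, expR_gt0) //.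
rewrite !(lnM, lnV) ?posrE ?(mulr_gt0, invr_gt0, expR_gt0) // !expRK.
rewrite /p in hp *; lra.
Qed.

Section carleson_lower_bound.
Context {R : realType} {beta g q s : R}.
Hypotheses (beta0 : 0 < beta) (q0 : 0 <= q) (qs : q < s).
Let p := s + beta - q.

Lemma weighted_bounded_log_carleson (mu : {measure set R -> \bar R}) (N : R -> R -> R) :
  (forall r t, 0 <= r < 1 -> 0 <= t < 1 -> 0 <= N r t) ->
  (forall r t, 0 <= r -> r <= t -> t < 1 -> loge g (1 - r) <= N r t) ->
  (exists M : R, forall r, 0 <= r < 1 -> (weighted_integral mu beta q s r (N r) <= M%:E)%E) ->
  log_carleson mu g s.
Proof.
move=> N0 NL [M hM]; exists (powR 2 p * (`|M| + 1)).
split=> [|r /andP[r0 r1]]; first by rewrite mulr_gt0 ?powR_gt0 // ltr_wpDl.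
have K0 : 0 < powR 2 p * powR (1 - r) s by rewrite mulr_gt0 ?powR_gt0 // subr_gt0.
set A := loge g (1 - r) / (powR 2 p * powR (1 - r) s).
have A0 : 0 <= A by rewrite divr_ge0 ?loge_ge0 // ltW.
pose D : set R := `[0%R, 1%R[%classic; pose E : set R := `[r, 1%R[%classic.
have mD : measurable D by exact: measurable_itv.
have mE : measurable E by exact: measurable_itv.
have ED : E `<=` D.
  by move=> t; rewrite /E /D /= !in_itv /= => /andP[rt ->]; rewrite (le_trans r0).
have hA : (A%:E * mu E <= M%:E)%E.
  apply: le_trans (hM r _); last by rewrite r0.
  rewrite -(setIidl ED) -(integral_indic _ mD mE) -(integralZl_indic mD (fun=> E) A) //; last first.
    by move=> /lt_le_trans /(_ A0); rewrite ltxx.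
  apply: ge0_le_integral_nonmeas => t; rewrite /D /= in_itv /= => t01.
    by rewrite lee_fin mulr_ge0.
  rewrite indicE lee_fin; case: (boolP (t \in E)) => [|_]; last first.
    by rewrite mulr0 divr_ge0 ?mulr_ge0 ?powR_ge0 ?N0 ?r0.
  rewrite inE /E /= in_itv /= => /andP[rt t1]; rewrite mulr1 mulrAC /A mulrC.
  apply: ler_pM; [by rewrite invr_ge0 ltW | exact: loge_ge0 | exact: kernel_ge | exact: NL].
rewrite -[loge g (1 - r)](divfK (lt0r_neq0 K0)) -/A EFinM -muleA muleCA.
apply: le_trans (lee_wpmul2l _ hA) _; first by rewrite lee_fin ltW.
rewrite -EFinM lee_fin mulrAC ler_wpM2r ?powR_ge0 // ler_wpM2l ?powR_ge0 //.
by rewrite (le_trans (ler_norm M)) // lerDl.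
Qed.

End carleson_lower_bound.

Lemma log_carleson_iff_weighted_bounded {R : realType} {beta g q s : R}
    (mu : {measure set R -> \bar R}) (N : R -> R -> R) :
  0 < beta -> 0 <= g -> 0 <= q -> q < s ->
  (forall r t, 0 <= r < 1 -> 0 <= t < 1 -> 0 <= N r t <= loge g (Num.min (1 - r) (1 - t))) ->
  (forall r t, 0 <= r -> r <= t -> t < 1 -> loge g (1 - r) <= N r t) ->
  log_carleson mu g s <->
  exists M : R, forall r, 0 <= r < 1 -> (weighted_integral mu beta q s r (N r) <= M%:E)%E.
Proof.
move=> beta0 g0 q0 qs NU NL; split; last first.
  apply: weighted_bounded_log_carleson => // r t r01 t01.
  by case/andP: (NU r t r01 t01).
move=> /(log_carleson_weighted_bounded beta0 g0 q0 qs) [M hM].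
by exists M => r r01; apply: hM => // t; exact: NU.
Qed.

Section complex_modulus.
Context {R : realType}.

Lemma cmod_ge0 (z : R[i]) : 0 <= cmod z.
Proof. by rewrite /cmod normc_def /= sqrtr_ge0. Qed.

Lemma cmod_real (t : R) : cmod (t%:C)%C = `|t|.
Proof. by rewrite /cmod normc_def /= expr0n addr0 sqrtr_sqr. Qed.

Lemma cmod_1subM_real (r t : R) : cmod (1 - (r%:C)%C * (t%:C)%C) = `|1 - r * t|.
Proof. by rewrite -rmorphM -(rmorph1 (real_complex R)) -rmorphB cmod_real. Qed.

Lemma cmod_1subM_ge (w : R[i]) (t : R) : 0 <= t -> 1 - cmod w * t <= cmod (1 - w * (t%:C)%C).
Proof.
move=> t0; have cmodE (z : R[i]) : `|z| = ((cmod z)%:C)%C by rewrite /cmod normc_def.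
have := lerB_dist 1 (w * (t%:C)%C); rewrite normrM !cmodE cmod_real ger0_norm //.
have -> : cmod (1 : R[i]) = 1 by rewrite -(rmorph1 (real_complex R)) cmod_real normr1.
by rewrite -rmorphM -(rmorph1 (real_complex R)) -rmorphB lecR.
Qed.

Lemma radial_bounded (F : R -> \bar R) :
  (exists M : R, forall w : R[i], cmod w < 1 -> (F (cmod w) <= M%:E)%E) <->
  (exists M : R, forall r, 0 <= r < 1 -> (F r <= M%:E)%E).
Proof.
split=> -[M hM]; exists M.
  by move=> r /andP[r0 r1]; have := hM (r%:C)%C; rewrite cmod_real ger0_norm //; apply.
by move=> w w1; apply: hM; rewrite cmod_ge0.
Qed.

End complex_modulus.

Theorem proposition3p1 (R : realType) (beta g q s : R)
  (mu : {measure set R -> \bar R})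
  (hbeta : 0 < beta) (hg : 0 <= g) (hq : 0 <= q) (hqs : q < s)
  (hsupp : mu (~` `[0%R, 1%R[%classic) = 0%E)
  (hfin : (mu `[0%R, 1%R[%classic < +oo)%E) :
  let I2 := fun w : R[i] => (\int[mu]_(t in `[0%R, 1%R[%classic)
      (powR (1 - cmod w) beta * loge g (1 - cmod w)
        / (powR (1 - t) q * powR (1 - cmod w * t) (s + beta - q)))%:E)%E in
  let I3 := fun w : R[i] => (\int[mu]_(t in `[0%R, 1%R[%classic)
      (powR (1 - cmod w) beta * loge g (1 - cmod w)
        / (powR (1 - t) q * powR (cmod (1 - w * (t%:C)%C)) (s + beta - q)))%:E)%E in
  let I4 := fun w : R[i] => (\int[mu]_(t in `[0%R, 1%R[%classic)
      (powR (1 - cmod w) beta * loge g (1 - t)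
        / (powR (1 - t) q * powR (1 - cmod w * t) (s + beta - q)))%:E)%E in
  [/\ (log_carleson mu g s <->
        exists C : R, forall w : R[i], cmod w < 1 -> (I2 w <= C%:E)%E),
      (log_carleson mu g s <->
        exists C : R, forall w : R[i], cmod w < 1 -> (I3 w <= C%:E)%E) &
      (log_carleson mu g s <->
        exists C : R, forall w : R[i], cmod w < 1 -> (I4 w <= C%:E)%E)].
Proof.
move=> I2 I3 I4.
have sub01 (r : R) : 0 <= r < 1 -> 0 < 1 - r <= 1.
  by case/andP=> r0 r1; rewrite subr_gt0 r1 lerBlDr lerDl.
have car2 : log_carleson mu g s <-> exists M : R, forall r, 0 <= r < 1 ->
    (weighted_integral mu beta q s r (fun=> loge g (1 - r)) <= M%:E)%E.
  apply: log_carleson_iff_weighted_bounded => // r t.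
  by move=> /sub01 r01 /sub01 t01; rewrite loge_ge0 loge_min // le_max lexx.
have car4 : log_carleson mu g s <-> exists M : R, forall r, 0 <= r < 1 ->
    (weighted_integral mu beta q s r (fun t => loge g (1 - t)) <= M%:E)%E.
  apply: log_carleson_iff_weighted_bounded => // r t.
    by move=> /sub01 r01 /sub01 t01; rewrite loge_ge0 loge_min // le_max lexx orbT.
  by move=> r0 rt t1; apply: le_loge; lra.
have I3_le_I2 w : cmod w < 1 -> (I3 w <= I2 w)%E.
  move=> w1; apply: ge0_le_integral_nonmeas => t; rewrite /= in_itv /= => /andP[t0 t1].
    by rewrite lee_fin divr_ge0 ?mulr_ge0 ?powR_ge0 ?loge_ge0.
  have wt : cmod w * t <= cmod w by rewrite ler_piMr ?cmod_ge0 ?ltW.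
  rewrite lee_fin ler_frac ?mulr_ge0 ?powR_ge0 ?loge_ge0 ?mulr_gt0 ?powR_gt0 //; try lra.
  rewrite ler_wpM2l ?powR_ge0 // ge0_ler_powR ?nnegrE ?cmod_ge0 ?cmod_1subM_ge //; lra.
have I3_real r : 0 <= r < 1 ->
    I3 (r%:C)%C = weighted_integral mu beta q s r (fun=> loge g (1 - r)).
  move=> /andP[r0 r1]; apply: eq_integral => t; rewrite inE /= in_itv /= => /andP[t0 t1].
  have rt : 0 <= 1 - r * t by rewrite subr_ge0 mulr_ile1 // ltW.
  by rewrite cmod_1subM_real cmod_real !ger0_norm.
split; [rewrite car2 | split | rewrite car4]; try exact: iff_sym (radial_bounded _).
- move=> /car2/radial_bounded[C hC].
  by exists C => w w1; apply: le_trans (I3_le_I2 w w1) (hC w w1).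
- case=> C hC; apply/car2; exists C => r r01; rewrite -I3_real //.
  by apply: hC; rewrite cmod_real ger0_norm; case/andP: r01.
Qed.
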